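(* Let $M\ge1$, let $a>\log M+3$, and let $X\sim\mathcal{N}(\mu^*,1)$ on $\mathbb{R}$ with $\mu^*\ge a$. Let $\mu_1,\dots,\mu_M\in\mathbb{R}$ be current centers and let $i\in[M]$ with $\mu_i\ge0$. Then $$\mathbb{E}[w_i(X)X]\ge0.$$ If moreover $\mu^*\le3a$ and $0\le\mu_i\le4a$, then $$\mathbb{E}[w_i(X)X]\ge\frac{a}{5M}e^{-9a^2/2}.$$
   Context: For current centers $\mu_1,\dots,\mu_M\in\mathbb{R}$, the membership weights are $$w_i(x)=\frac{e^{-(x-\mu_i)^2/2}}{\sum_{j=1}^M e^{-(x-\mu_j)^2/2}}.$$ *)

From Stdlib Require Import Reals Lra Lia.
Open Scope R_scope.

Definition gker (m x : R) : R := exp (- (x - m) ^ 2 / 2).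

(* Membership weight w_i(x) for centers mu_0,...,mu_{M-1}
   (0-indexed: the paper's mu_1..mu_M are mu 0 .. mu (M-1)). *)
Definition weight (M : nat) (mu : nat -> R) (i : nat) (x : R) : R :=
  gker (mu i) x / sum_f_R0 (fun j => gker (mu j) x) (M - 1).

Definition gauss_density (m x : R) : R := gker m x / sqrt (2 * PI).

(* Improper Riemann integral over R: l is the limit of the integral over
   [-A, B] as A, B -> +infinity independently (integrability on each
   such interval is part of the requirement). *)
Definition improper_int (f : R -> R) (l : R) : Prop :=
  forall eps, 0 < eps -> exists T0 : R, forall A B : R,
    T0 <= A -> T0 <= B ->
    exists pr : Riemann_integrable f (- A) B, Rabs (RiemannInt pr - l) < eps.

(* E[w_i(X) X] for X ~ N(mustar, 1): the integrand. *)
Definition integrand (M : nat) (mu : nat -> R) (i : nat) (mustar : R) (x : R) : R :=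
  weight M mu i x * x * gauss_density mustar x.

(* Let [s] be the supremum of [w_i] on the negative half-line.  There the
   integrand is at least [s (x - mustar)] times the Gaussian density, whose
   integral over [(-oo, 0]] is [- s e^{-mustar^2/2} / sqrt (2 pi)].  Comparing the
   normalisers term by term gives [w_i(x) e^{-y^2/2} <= (M + 1) w_i(y)] for
   [x <= y] (this uses [mu_i >= 0]), hence [s e^{-y^2/2} <= (M + 1) w_i(y)] for
   [y >= 0].  On the unit interval around [mustar/2] the integrand is therefore at
   least [s e^{-1/4 - mustar^2/4} / ((M + 1) sqrt (2 pi))], which is twice the
   bound on the negative part as soon as [mustar > log M + 3].  So the integral is at least half
   of [int_0^B] for every large [B]: this gives nonnegativity, and bounding the
   integrand on the unit interval around [(mu_i + mustar)/2] with
   [w_i >= e^{-(x - mu_i)^2/2} / M] gives the quantitative bound. *)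

From Stdlib Require Import Reals Lra Lia Psatz Classical.
From Coquelicot Require Import Coquelicot.
Open Scope R_scope.

Lemma exp_le_compat x y : x <= y -> exp x <= exp y.
Proof.
  intros [Hlt | ->]; [left; apply exp_increasing |]; lra.
Qed.

Lemma gker_pos m x : 0 < gker m x.
Proof. apply exp_pos. Qed.

Lemma gker_le_1 m x : gker m x <= 1.
Proof.
  rewrite <- exp_0; apply exp_le_compat.
  pose proof (pow2_ge_0 (x - m)); lra.
Qed.

Lemma gker_exchange mj mi x y :
  mj <= mi -> x <= y -> gker mj y * gker mi x <= gker mj x * gker mi y.
Proof.
  intros Hm Hxy; unfold gker; rewrite <- !exp_plus; apply exp_le_compat.
  assert (0 <= (y - x) * (mi - mj)) by (apply Rmult_le_pos; lra).
  nra.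
Qed.

Lemma gker_0_mul_le mi mj y :
  0 <= mi -> mi <= mj -> gker 0 y * gker mj y <= gker mi y.
Proof.
  intros Hmi Hmij; unfold gker; rewrite <- exp_plus; apply exp_le_compat.
  assert (0 <= (mj - mi) * mi) by (apply Rmult_le_pos; lra).
  pose proof (pow2_ge_0 (y - (mj - mi))).
  nra.
Qed.

Lemma gker_mul_ge m1 m2 y :
  (m1 + m2) / 2 - 1 / 2 <= y <= (m1 + m2) / 2 + 1 / 2 ->
  exp (-1 / 4 - (m2 - m1) ^ 2 / 4) <= gker m1 y * gker m2 y.
Proof.
  intros Hy; unfold gker; rewrite <- exp_plus; apply exp_le_compat.
  (* (y-m1)^2 + (y-m2)^2 = 2 (y - (m1+m2)/2)^2 + (m2-m1)^2/2 *)
  assert (Hc : (y - (m1 + m2) / 2) ^ 2 <= 1 / 4) by nra.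
  nra.
Qed.

(* A centre [mj <= mi] is handled by the likelihood-ratio exchange, a centre
   [mj > mi] by the damping factor [gker 0 y]. *)
Lemma gker_cross_le mi mj x y :
  0 <= mi -> x <= y ->
  gker 0 y * gker mj y * gker mi x <= gker mj x * gker mi y + gker mi x * gker mi y.
Proof.
  intros Hmi Hxy.
  pose proof (gker_pos mj x); pose proof (gker_pos mj y); pose proof (gker_pos mi x).
  pose proof (gker_pos mi y); pose proof (gker_pos 0 y); pose proof (gker_le_1 0 y).
  destruct (Rle_or_lt mj mi) as [Hj | Hj].
  - pose proof (gker_exchange mj mi x y Hj Hxy).
    assert (0 <= gker mj y * gker mi x) by (apply Rmult_le_pos; lra).
    nra.
  - pose proof (gker_0_mul_le mi mj y Hmi ltac:(lra)).
    nra.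
Qed.

Lemma mul_gker_le_exp m x : 0 <= x -> x * gker m x <= exp (2 * m + 2) * exp (- x).
Proof.
  intros Hx.
  apply Rle_trans with (exp x * gker m x).
  - apply Rmult_le_compat_r; [left; apply gker_pos |].
    pose proof (exp_ineq1_le x); lra.
  - unfold gker; rewrite <- !exp_plus; apply exp_le_compat.
    pose proof (pow2_ge_0 (x - m - 2)); nra.
Qed.

Lemma continuous_gker m x : continuous (gker m) x.
Proof.
  apply (@ex_derive_continuous R_AbsRing R_NormedModule); unfold gker; auto_derive; auto.
Qed.

Lemma is_RInt_gker_slope m a b :
  is_RInt (fun x => (x - m) * gker m x) a b (gker m a - gker m b).
Proof.
  replace (gker m a - gker m b) with (minus (- gker m b) (- gker m a))
    by (unfold minus, plus, opp; simpl; ring).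
  apply (is_RInt_derive (V := R_CompleteNormedModule) (fun x => - gker m x)).
  - intros x _; unfold gker; auto_derive; [auto |].
    replace (- ((x + - m) * ((x + - m) * 1)) * / 2) with (- (x - m) ^ 2 / 2) by field.
    field.
  - intros x _; apply (continuous_mult (K := R_AbsRing)); [| apply continuous_gker].
    apply (@ex_derive_continuous R_AbsRing R_NormedModule); auto_derive; auto.
Qed.

Lemma is_RInt_exp_opp a b : is_RInt (fun x => exp (- x)) a b (exp (- a) - exp (- b)).
Proof.
  replace (exp (- a) - exp (- b)) with (minus (- exp (- b)) (- exp (- a)))
    by (unfold minus, plus, opp; simpl; ring).
  apply (is_RInt_derive (V := R_CompleteNormedModule) (fun x => - exp (- x))).
  - intros x _; auto_derive; [auto | ring].
  - intros x _; apply (@ex_derive_continuous R_AbsRing R_NormedModule); auto_derive; auto.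
Qed.

Lemma sup_separates (P Q : R -> Prop) (g h : R -> R) :
  (exists x, P x) -> (exists y, Q y) ->
  (forall x y, P x -> Q y -> g x <= h y) ->
  exists s, (forall x, P x -> g x <= s) /\ (forall y, Q y -> s <= h y).
Proof.
  intros [x0 Px0] [y0 Qy0] Hgh.
  destruct (completeness (fun z => exists x, P x /\ z = g x)) as [s [Hub Hlub]].
  - exists (h y0); intros z [x [Px ->]]; auto.
  - exists (g x0), x0; auto.
  - exists s; split.
    + intros x Px; apply Hub; eauto.
    + intros y Qy; apply Hlub; intros z [x [Px ->]]; auto.
Qed.

Lemma nondecreasing_bounded_limit (F : R -> R) (C : R) :
  (forall u v, 0 <= u -> u <= v -> F u <= F v) ->
  (forall u, 0 <= u -> F u <= C) ->
  exists l, (forall u, 0 <= u -> F u <= l) /\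
    forall eps, 0 < eps -> exists u0, 0 <= u0 /\ forall u, u0 <= u -> l - eps < F u.
Proof.
  intros Hmono Hbound.
  destruct (completeness (fun z => exists u, 0 <= u /\ z = F u)) as [l [Hub Hlub]].
  - exists C; intros z [u [Hu ->]]; auto.
  - exists (F 0), 0; split; [lra | reflexivity].
  - exists l; split; [intros u Hu; apply Hub; eauto |].
    intros eps Heps.
    apply NNPP; intros Hno.
    assert (l <= l - eps); [| lra].
    apply Hlub; intros z [u [Hu ->]].
    apply Rnot_lt_le; intros Hlt; apply Hno.
    exists u; split; [exact Hu |].
    intros v Hv; specialize (Hmono u v Hu Hv); lra.
Qed.

Section SignChange.

Variable f : R -> R.
Hypothesis f_ex_RInt : forall a b, ex_RInt f a b.
Hypothesis f_nonneg : forall x, 0 <= x -> 0 <= f x.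
Hypothesis f_nonpos : forall x, x <= 0 -> f x <= 0.

Lemma RInt_right_ge_subinterval lo hi B L :
  0 <= lo -> lo <= hi -> hi <= B -> (forall y, lo < y < hi -> L <= f y) ->
  (hi - lo) * L <= RInt f 0 B.
Proof.
  intros H0 Hlh HhB HL.
  rewrite <- (RInt_Chasles f 0 lo B), <- (RInt_Chasles f lo hi B) by auto.
  assert (0 <= RInt f 0 lo) by (apply RInt_ge_0; auto; intros; apply f_nonneg; lra).
  assert (0 <= RInt f hi B) by (apply RInt_ge_0; auto; intros; apply f_nonneg; lra).
  assert (RInt (fun _ => L) lo hi <= RInt f lo hi)
    by (apply RInt_le; auto; apply ex_RInt_const).
  rewrite RInt_const in *; unfold scal, plus in *; simpl in *; unfold mult in *; simpl in *.
  lra.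
Qed.

Lemma RInt_right_nondecreasing u v : 0 <= u -> u <= v -> RInt f 0 u <= RInt f 0 v.
Proof.
  intros Hu Huv; rewrite <- (RInt_Chasles f 0 u v) by auto.
  assert (0 <= RInt f u v) by (apply RInt_ge_0; auto; intros; apply f_nonneg; lra).
  unfold plus; simpl; lra.
Qed.

Lemma RInt_left_nonincreasing u v : 0 <= u -> u <= v -> RInt f (- v) 0 <= RInt f (- u) 0.
Proof.
  intros Hu Huv; rewrite <- (RInt_Chasles f (- v) (- u) 0) by auto.
  assert (RInt f (- v) (- u) <= RInt (fun _ => 0) (- v) (- u)).
  { apply RInt_le; auto; [lra | apply ex_RInt_const |].
    intros x Hx; apply f_nonpos; lra. }
  rewrite RInt_const in H; unfold scal, plus in *; simpl in *; unfold mult in *; simpl in *.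
  lra.
Qed.

Lemma improper_int_sign_change C D :
  (forall B, 0 <= B -> RInt f 0 B <= C) ->
  (forall A, 0 <= A -> - D <= RInt f (- A) 0) ->
  exists E, improper_int f E /\ forall B, 0 <= B -> RInt f 0 B - D <= E.
Proof.
  intros HC HD.
  destruct (nondecreasing_bounded_limit (fun B => RInt f 0 B) C) as [P [HP HPlim]];
    [exact RInt_right_nondecreasing | exact HC |].
  destruct (nondecreasing_bounded_limit (fun A => - RInt f (- A) 0) D) as [N [HN HNlim]].
  { intros u v Hu Huv; pose proof (RInt_left_nonincreasing u v Hu Huv); lra. }
  { intros A HA; pose proof (HD A HA); lra. }
  exists (P - N); split.
  - intros eps Heps.
    destruct (HPlim (eps / 2) ltac:(lra)) as [B0 [HB0 HB]].
    destruct (HNlim (eps / 2) ltac:(lra)) as [A0 [HA0 HA]].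
    exists (Rmax B0 A0); intros A B HAge HBge.
    pose proof (Rmax_l B0 A0); pose proof (Rmax_r B0 A0).
    exists (ex_RInt_Reals_0 _ _ _ (f_ex_RInt (- A) B)).
    rewrite <- RInt_Reals, <- (RInt_Chasles f (- A) 0 B) by auto.
    unfold plus; simpl.
    specialize (HB B ltac:(lra)); specialize (HA A ltac:(lra)).
    pose proof (HP B ltac:(lra)); pose proof (HN A ltac:(lra)).
    apply Rabs_def1; lra.
  - intros B HB.
    assert (N <= D).
    { destruct (Rle_or_lt N D) as [| HND]; [assumption | exfalso].
      destruct (HNlim (N - D) ltac:(lra)) as [A0 [HA0 HA]].
      specialize (HA A0 (Rle_refl _)); pose proof (HD A0 HA0); lra. }
    pose proof (HP B HB); lra.
Qed.

End SignChange.

Definition gker_sum (M : nat) (mu : nat -> R) (x : R) : R :=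
  sum_f_R0 (fun j => gker (mu j) x) (M - 1).

Lemma sum_f_R0_term_le (h : nat -> R) (N k : nat) :
  (forall j, 0 <= h j) -> (k <= N)%nat -> h k <= sum_f_R0 h N.
Proof.
  intros Hh; induction N as [| N IH]; intros Hk; simpl.
  - replace k with 0%nat by lia; lra.
  - destruct (Nat.eq_dec k (S N)) as [-> | Hne].
    + pose proof (cond_pos_sum h N Hh); lra.
    + pose proof (IH ltac:(lia)); pose proof (Hh (S N)); lra.
Qed.

Section Weights.

Variables (M : nat) (mu : nat -> R) (i : nat).
Hypothesis i_lt_M : (i < M)%nat.

Lemma weight_gker_sum x : weight M mu i x = gker (mu i) x / gker_sum M mu x.
Proof. reflexivity. Qed.

Lemma gker_le_sum x : gker (mu i) x <= gker_sum M mu x.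
Proof.
  apply (sum_f_R0_term_le (fun j => gker (mu j) x)); [| lia].
  intros j; left; apply gker_pos.
Qed.

Lemma gker_sum_pos x : 0 < gker_sum M mu x.
Proof. pose proof (gker_pos (mu i) x); pose proof (gker_le_sum x); lra. Qed.

Lemma gker_sum_le_INR x : gker_sum M mu x <= INR M.
Proof.
  unfold gker_sum.
  replace (INR M) with (sum_f_R0 (fun _ => 1) (M - 1))
    by (rewrite sum_cte, Rmult_1_l; f_equal; lia).
  apply sum_Rle; intros; apply gker_le_1.
Qed.

Lemma weight_pos x : 0 < weight M mu i x.
Proof.
  apply Rdiv_lt_0_compat; [apply gker_pos | apply gker_sum_pos].
Qed.

Lemma weight_le_1 x : weight M mu i x <= 1.
Proof.
  pose proof (gker_sum_pos x).
  apply Rmult_le_reg_r with (gker_sum M mu x); [lra |].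
  rewrite weight_gker_sum; field_simplify; [apply gker_le_sum | lra].
Qed.

Lemma gker_div_INR_le_weight x : gker (mu i) x / INR M <= weight M mu i x.
Proof.
  pose proof (gker_sum_pos x); pose proof (gker_sum_le_INR x).
  rewrite weight_gker_sum.
  apply Rmult_le_compat_l; [left; apply gker_pos |].
  apply Rinv_le_contravar; lra.
Qed.

Lemma weight_mul_gker_0_le x y :
  0 <= mu i -> x <= y ->
  weight M mu i x * gker 0 y <= (INR M + 1) * weight M mu i y.
Proof.
  intros Hmu Hxy; rewrite !weight_gker_sum.
  set (gx := gker (mu i) x); set (gy := gker (mu i) y).
  set (Sx := gker_sum M mu x); set (Sy := gker_sum M mu y).
  assert (Hgx : 0 < gx) by apply gker_pos.
  assert (Hgy : 0 < gy) by apply gker_pos.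
  assert (HSx : gx <= Sx) by apply gker_le_sum.
  assert (HSy : 0 < Sy) by apply gker_sum_pos.
  assert (Hsum : sum_f_R0 (fun j => gker (mu j) y * (gker 0 y * gx)) (M - 1)
                 <= sum_f_R0 (fun j => gker (mu j) x * gy + gx * gy) (M - 1)).
  { apply sum_Rle; intros j _.
    rewrite <- Rmult_assoc, (Rmult_comm (gker (mu j) y)).
    apply gker_cross_le; assumption. }
  rewrite plus_sum, <- !scal_sum, sum_cte in Hsum.
  replace (S (M - 1)) with M in Hsum by lia.
  change (sum_f_R0 (fun j => gker (mu j) y) (M - 1)) with Sy in Hsum.
  change (sum_f_R0 (fun j => gker (mu j) x) (M - 1)) with Sx in Hsum.
  assert (gx * INR M <= Sx * INR M) by (apply Rmult_le_compat_r; [apply pos_INR | lra]).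
  assert (Hkey : gx * gker 0 y * Sy <= (INR M + 1) * gy * Sx) by nra.
  apply Rmult_le_reg_r with (Sx * Sy); [apply Rmult_lt_0_compat; lra |].
  replace (gx / Sx * gker 0 y * (Sx * Sy)) with (gx * gker 0 y * Sy) by (field; lra).
  replace ((INR M + 1) * (gy / Sy) * (Sx * Sy)) with ((INR M + 1) * gy * Sx) by (field; lra).
  exact Hkey.
Qed.

End Weights.

Lemma sqrt_2PI_pos : 0 < sqrt (2 * PI).
Proof. apply sqrt_lt_R0; pose proof PI_RGT_0; lra. Qed.

Lemma sqrt_2PI_le_3 : sqrt (2 * PI) <= 3.
Proof.
  rewrite <- (sqrt_square 3) by lra.
  apply sqrt_le_1; pose proof PI_RGT_0; pose proof PI_4; lra.
Qed.

Section Integrand.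

Variables (M : nat) (mu : nat -> R) (i : nat) (m : R).
Hypothesis i_lt_M : (i < M)%nat.

Let f := integrand M mu i m.

Lemma integrand_eq x : f x = weight M mu i x * x * gker m x / sqrt (2 * PI).
Proof. unfold f, integrand, gauss_density; pose proof sqrt_2PI_pos; field; lra. Qed.

Lemma integrand_ge_div x c : c <= weight M mu i x * x * gker m x -> c / sqrt (2 * PI) <= f x.
Proof.
  intros Hc; rewrite integrand_eq.
  apply Rmult_le_compat_r; [left; apply Rinv_0_lt_compat, sqrt_2PI_pos | exact Hc].
Qed.

Lemma integrand_nonneg x : 0 <= x -> 0 <= f x.
Proof.
  intros Hx; rewrite <- (Rdiv_0_l (sqrt (2 * PI))); apply integrand_ge_div.
  pose proof (weight_pos M mu i i_lt_M x); pose proof (gker_pos m x).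
  apply Rmult_le_pos; [apply Rmult_le_pos |]; lra.
Qed.

Lemma integrand_nonpos x : x <= 0 -> f x <= 0.
Proof.
  intros Hx; rewrite integrand_eq.
  pose proof (weight_pos M mu i i_lt_M x); pose proof (gker_pos m x); pose proof sqrt_2PI_pos.
  apply Rmult_le_0_r; [| left; apply Rinv_0_lt_compat; lra].
  assert (0 <= weight M mu i x * - x * gker m x) by (apply Rmult_le_pos; [apply Rmult_le_pos |]; lra).
  lra.
Qed.

Lemma integrand_le_exp x : 0 <= x -> f x <= exp (2 * m + 2) / sqrt (2 * PI) * exp (- x).
Proof.
  intros Hx; rewrite integrand_eq.
  pose proof (weight_pos M mu i i_lt_M x); pose proof (weight_le_1 M mu i i_lt_M x).
  pose proof (gker_pos m x); pose proof (mul_gker_le_exp m x Hx).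
  replace (exp (2 * m + 2) / sqrt (2 * PI) * exp (- x))
    with (exp (2 * m + 2) * exp (- x) / sqrt (2 * PI)) by (unfold Rdiv; ring).
  apply Rmult_le_compat_r; [left; apply Rinv_0_lt_compat, sqrt_2PI_pos |].
  assert (0 <= x * gker m x) by (apply Rmult_le_pos; lra).
  nra.
Qed.

Lemma integrand_ge_slope s x :
  0 <= m -> x <= 0 -> weight M mu i x <= s ->
  s * ((x - m) * gker m x) / sqrt (2 * PI) <= f x.
Proof.
  intros Hm Hx Hs; apply integrand_ge_div.
  pose proof (weight_pos M mu i i_lt_M x); pose proof (gker_pos m x).
  rewrite <- Rmult_assoc; apply Rmult_le_compat_r; [lra | nra].
Qed.

Lemma continuous_integrand x : continuous f x.
Proof.
  unfold f, integrand, weight, gauss_density, Rdiv.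
  repeat apply (continuous_mult (K := R_AbsRing));
    try apply continuous_gker; try apply continuous_id; try apply continuous_const.
  apply continuous_Rinv_comp.
  - generalize x; induction (M - 1)%nat as [| n IH]; intros y; simpl;
      [apply continuous_gker | apply (continuous_plus (V := R_NormedModule)); [apply IH | apply continuous_gker]].
  - pose proof (gker_sum_pos M mu i i_lt_M x); unfold gker_sum in *; lra.
Qed.

Lemma ex_RInt_integrand a b : ex_RInt f a b.
Proof.
  apply (ex_RInt_continuous (V := R_CompleteNormedModule)); intros; apply continuous_integrand.
Qed.


Lemma RInt_integrand_le B : 0 <= B -> RInt f 0 B <= exp (2 * m + 2) / sqrt (2 * PI).
Proof.
  intros HB; set (C := exp (2 * m + 2) / sqrt (2 * PI)).
  assert (HC : 0 <= C) by (left; apply Rdiv_lt_0_compat; [apply exp_pos | apply sqrt_2PI_pos]).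
  assert (Hle : RInt f 0 B <= C * (exp (- 0) - exp (- B))).
  { apply (is_RInt_le f (fun x => C * exp (- x)) 0 B); [lra | | |].
    - apply (RInt_correct (V := R_CompleteNormedModule)), ex_RInt_integrand.
    - apply (is_RInt_scal (V := R_NormedModule)), is_RInt_exp_opp.
    - intros x Hx; apply integrand_le_exp; lra. }
  rewrite Ropp_0, exp_0 in Hle; pose proof (exp_pos (- B)); nra.
Qed.

Lemma RInt_integrand_ge s A :
  0 <= m -> 0 <= s -> (forall x, x <= 0 -> weight M mu i x <= s) -> 0 <= A ->
  - (s * gker m 0 / sqrt (2 * PI)) <= RInt f (- A) 0.
Proof.
  intros Hm Hs Hws HA; pose proof sqrt_2PI_pos.
  assert (Hle : s / sqrt (2 * PI) * (gker m (- A) - gker m 0) <= RInt f (- A) 0).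
  { apply (is_RInt_le (fun x => s / sqrt (2 * PI) * ((x - m) * gker m x)) f (- A) 0);
      [lra | | |].
    - apply (is_RInt_scal (V := R_NormedModule)), is_RInt_gker_slope.
    - apply (RInt_correct (V := R_CompleteNormedModule)), ex_RInt_integrand.
    - intros x Hx.
      replace (s / sqrt (2 * PI) * ((x - m) * gker m x))
        with (s * ((x - m) * gker m x) / sqrt (2 * PI)) by (field; lra).
      apply integrand_ge_slope; [lra | lra | apply Hws; lra]. }
  pose proof (gker_pos m (- A)).
  assert (0 <= s / sqrt (2 * PI) * gker m (- A))
    by (apply Rmult_le_pos; [apply Rdiv_le_0_compat |]; lra).
  replace (s * gker m 0 / sqrt (2 * PI)) with (s / sqrt (2 * PI) * gker m 0) by (field; lra).
  lra.
Qed.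

Lemma RInt_integrand_ge_near_half s B :
  3 <= m -> 0 <= s -> (forall y, 0 <= y -> s * gker 0 y <= (INR M + 1) * weight M mu i y) ->
  m / 2 + 1 / 2 <= B ->
  s * exp (-1 / 4 - m ^ 2 / 4) / ((INR M + 1) * sqrt (2 * PI)) <= RInt f 0 B.
Proof.
  intros Hm Hs Hsw HB.
  match goal with |- ?L <= _ =>
    replace L with ((m / 2 + 1 / 2 - (m / 2 - 1 / 2)) * L)
      by (pose proof sqrt_2PI_pos; pose proof (pos_INR M); field; lra) end.
  apply RInt_right_ge_subinterval; try lra;
    [apply ex_RInt_integrand | apply integrand_nonneg |].
  intros y Hy.
  replace (s * exp (-1 / 4 - m ^ 2 / 4) / ((INR M + 1) * sqrt (2 * PI)))
    with (s * exp (-1 / 4 - m ^ 2 / 4) / (INR M + 1) / sqrt (2 * PI))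
    by (pose proof sqrt_2PI_pos; pose proof (pos_INR M); field; lra).
  apply integrand_ge_div.
  pose proof (gker_mul_ge 0 m y ltac:(lra)) as Hg.
  replace ((m - 0) ^ 2) with (m ^ 2) in Hg by ring.
  pose proof (Hsw y ltac:(lra)) as Hw.
  pose proof (weight_pos M mu i i_lt_M y); pose proof (gker_pos m y); pose proof (pos_INR M).
  assert (0 <= weight M mu i y * gker m y) by (apply Rmult_le_pos; lra).
  apply Rle_trans with (weight M mu i y * gker m y); [| nra].
  apply Rmult_le_reg_r with (INR M + 1); [lra |].
  replace (s * exp (-1 / 4 - m ^ 2 / 4) / (INR M + 1) * (INR M + 1))
    with (s * exp (-1 / 4 - m ^ 2 / 4)) by (field; lra).
  apply Rle_trans with (s * gker 0 y * gker m y); [rewrite Rmult_assoc; apply Rmult_le_compat_l; lra |].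
  replace (weight M mu i y * gker m y * (INR M + 1))
    with ((INR M + 1) * weight M mu i y * gker m y) by ring.
  apply Rmult_le_compat_r; lra.
Qed.

Lemma RInt_integrand_ge_near_mid B :
  0 <= mu i -> 1 <= m -> (mu i + m) / 2 + 1 / 2 <= B ->
  (m / 2 - 1 / 2) * exp (-1 / 4 - (m - mu i) ^ 2 / 4) / (INR M * sqrt (2 * PI))
    <= RInt f 0 B.
Proof.
  intros Hmu Hm HB.
  assert (HM : 0 < INR M) by (apply lt_0_INR; lia).
  match goal with |- ?L <= _ =>
    replace L with (((mu i + m) / 2 + 1 / 2 - ((mu i + m) / 2 - 1 / 2)) * L)
      by (pose proof sqrt_2PI_pos; pose proof (pos_INR M); field; lra) end.
  apply RInt_right_ge_subinterval; try lra;
    [apply ex_RInt_integrand | apply integrand_nonneg |].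
  intros y Hy.
  replace ((m / 2 - 1 / 2) * exp (-1 / 4 - (m - mu i) ^ 2 / 4) / (INR M * sqrt (2 * PI)))
    with ((m / 2 - 1 / 2) * (exp (-1 / 4 - (m - mu i) ^ 2 / 4) / INR M) / sqrt (2 * PI))
    by (pose proof sqrt_2PI_pos; field; lra).
  apply integrand_ge_div.
  pose proof (gker_mul_ge (mu i) m y ltac:(lra)) as Hg.
  pose proof (gker_div_INR_le_weight M mu i i_lt_M y) as Hw.
  pose proof (gker_pos m y).
  assert (Hgw : exp (-1 / 4 - (m - mu i) ^ 2 / 4) / INR M <= weight M mu i y * gker m y).
  { apply Rle_trans with (gker (mu i) y / INR M * gker m y); [| apply Rmult_le_compat_r; lra].
    unfold Rdiv; rewrite Rmult_assoc, (Rmult_comm (/ INR M)), <- Rmult_assoc.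
    apply Rmult_le_compat_r; [left; apply Rinv_0_lt_compat |]; lra. }
  pose proof (exp_pos (-1 / 4 - (m - mu i) ^ 2 / 4)).
  assert (0 <= exp (-1 / 4 - (m - mu i) ^ 2 / 4) / INR M) by (apply Rdiv_le_0_compat; lra).
  nra.
Qed.

End Integrand.

Lemma ln_INR_nonneg M : (1 <= M)%nat -> 0 <= ln (INR M).
Proof.
  intros HM; rewrite <- ln_1; apply ln_le; [lra | apply (le_INR 1); exact HM].
Qed.

Lemma gker_0_le_quarter_exp M m :
  (1 <= M)%nat -> ln (INR M) + 3 < m ->
  2 * (INR M + 1) * gker m 0 <= exp (-1 / 4 - m ^ 2 / 4).
Proof.
  intros HM Hm.
  assert (HM1 : 1 <= INR M) by (apply (le_INR 1); exact HM).
  pose proof (ln_INR_nonneg M HM) as HL.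
  assert (He : 4 * INR M <= exp (2 + ln (INR M))).
  { rewrite exp_plus, exp_ln by lra.
    replace 2 with (1 + 1) by ring; rewrite exp_plus.
    pose proof (exp_ineq1_le 1); apply Rmult_le_compat_r; nra. }
  assert (Hq : exp (2 + ln (INR M)) <= exp (m ^ 2 / 4 - 1 / 4)) by (apply exp_le_compat; nra).
  replace (exp (-1 / 4 - m ^ 2 / 4)) with (exp (m ^ 2 / 4 - 1 / 4) * gker m 0)
    by (unfold gker; rewrite <- exp_plus; f_equal; field).
  apply Rmult_le_compat_r; [left; apply gker_pos | lra].
Qed.

Lemma quantitative_constant_le M a m c :
  (1 <= M)%nat -> 3 <= a -> a <= m -> c ^ 2 <= 9 * a ^ 2 ->
  a / (5 * INR M) * exp (- 9 * a ^ 2 / 2)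
    <= (m / 2 - 1 / 2) * exp (-1 / 4 - c ^ 2 / 4) / (INR M * sqrt (2 * PI)) / 2.
Proof.
  intros HM Ha Ham Hc.
  assert (HM1 : 1 <= INR M) by (apply (le_INR 1); exact HM).
  pose proof sqrt_2PI_pos; pose proof sqrt_2PI_le_3.
  set (E := exp (- 9 * a ^ 2 / 2)).
  set (Q := exp (9 * a ^ 2 / 4 - 1 / 4)).
  assert (HE : 0 < E) by apply exp_pos.
  (* [exp (9 a^2 / 4 - 1 / 4) >= 1 + 81/4 - 1/4 = 21] since [a >= 3] *)
  assert (HQ : 21 <= Q) by (pose proof (exp_ineq1_le (9 * a ^ 2 / 4 - 1 / 4)); unfold Q; nra).
  assert (Hexp : Q * E <= exp (-1 / 4 - c ^ 2 / 4)).
  { unfold Q, E; rewrite <- exp_plus; apply exp_le_compat; lra. }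
  apply Rmult_le_reg_r with (2 * INR M * sqrt (2 * PI)); [nra |].
  replace (a / (5 * INR M) * E * (2 * INR M * sqrt (2 * PI)))
    with (2 * a * sqrt (2 * PI) * E / 5) by (field; lra).
  replace ((m / 2 - 1 / 2) * exp (-1 / 4 - c ^ 2 / 4) / (INR M * sqrt (2 * PI)) / 2
             * (2 * INR M * sqrt (2 * PI)))
    with ((m / 2 - 1 / 2) * exp (-1 / 4 - c ^ 2 / 4)) by (field; lra).
  assert (2 * a * sqrt (2 * PI) / 5 <= (m / 2 - 1 / 2) * Q) by nra.
  assert (0 <= Q * E) by nra.
  nra.
Qed.

Lemma weight_separator M mu i :
  (i < M)%nat -> 0 <= mu i ->
  exists s, 0 <= s /\ (forall x, x <= 0 -> weight M mu i x <= s) /\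
    forall y, 0 <= y -> s * gker 0 y <= (INR M + 1) * weight M mu i y.
Proof.
  intros Hi Hmu.
  destruct (sup_separates (fun x => x <= 0) (fun y => 0 <= y) (weight M mu i)
              (fun y => (INR M + 1) * weight M mu i y / gker 0 y)) as [s [Hs_left Hs_right]].
  - exists 0; lra.
  - exists 0; lra.
  - intros x y Hx Hy; pose proof (gker_pos 0 y).
    apply Rmult_le_reg_r with (gker 0 y); [lra |].
    replace ((INR M + 1) * weight M mu i y / gker 0 y * gker 0 y)
      with ((INR M + 1) * weight M mu i y) by (field; lra).
    apply weight_mul_gker_0_le; auto; lra.
  - exists s; split; [| split; [exact Hs_left |]].
    + pose proof (weight_pos M mu i Hi 0); pose proof (Hs_left 0); lra.
    + intros y Hy; pose proof (gker_pos 0 y); pose proof (Hs_right y Hy).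
      apply Rmult_le_reg_r with (/ gker 0 y); [apply Rinv_0_lt_compat; lra |].
      replace (s * gker 0 y * / gker 0 y) with s by (field; lra); assumption.
Qed.

Lemma improper_int_integrand_ge_half M mu i m :
  (1 <= M)%nat -> (i < M)%nat -> 0 <= mu i -> ln (INR M) + 3 < m ->
  exists E, improper_int (integrand M mu i m) E /\
    forall B, m / 2 + 1 / 2 <= B -> RInt (integrand M mu i m) 0 B / 2 <= E.
Proof.
  intros HM Hi Hmu Hm; pose proof (ln_INR_nonneg M HM).
  destruct (weight_separator M mu i Hi Hmu) as [s [Hs [Hs_left Hs_right]]].
  set (D := s * gker m 0 / sqrt (2 * PI)).
  destruct (improper_int_sign_change (integrand M mu i m) (ex_RInt_integrand M mu i m Hi)
              (integrand_nonneg M mu i m Hi) (integrand_nonpos M mu i m Hi)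
              (exp (2 * m + 2) / sqrt (2 * PI)) D (RInt_integrand_le M mu i m Hi))
    as [E [HE HEB]].
  { intros A HA; apply RInt_integrand_ge; auto; lra. }
  exists E; split; [exact HE |]; intros B HB.
  pose proof (RInt_integrand_ge_near_half M mu i m Hi s B ltac:(lra) Hs Hs_right HB).
  assert (HD : 2 * D <= s * exp (-1 / 4 - m ^ 2 / 4) / ((INR M + 1) * sqrt (2 * PI))).
  { pose proof sqrt_2PI_pos; pose proof (pos_INR M).
    replace (2 * D) with (s / ((INR M + 1) * sqrt (2 * PI)) * (2 * (INR M + 1) * gker m 0))
      by (unfold D; field; lra).
    replace (s * exp (-1 / 4 - m ^ 2 / 4) / ((INR M + 1) * sqrt (2 * PI)))
      with (s / ((INR M + 1) * sqrt (2 * PI)) * exp (-1 / 4 - m ^ 2 / 4)) by (field; lra).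
    apply Rmult_le_compat_l; [apply Rdiv_le_0_compat; nra |].
    apply gker_0_le_quarter_exp; assumption. }
  pose proof (HEB B ltac:(lra)); lra.
Qed.

Theorem lemma5 (M : nat) (a mustar : R) (mu : nat -> R) (i : nat) :
  (1 <= M)%nat ->
  ln (INR M) + 3 < a ->
  a <= mustar ->
  (i < M)%nat ->
  0 <= mu i ->
  (exists E, improper_int (integrand M mu i mustar) E /\ 0 <= E) /\
  (mustar <= 3 * a -> mu i <= 4 * a ->
   exists E, improper_int (integrand M mu i mustar) E /\
             a / (5 * INR M) * exp (- 9 * a ^ 2 / 2) <= E).
Proof.
  intros HM Ha Ham Hi Hmu; pose proof (ln_INR_nonneg M HM).
  destruct (improper_int_integrand_ge_half M mu i mustar HM Hi Hmu ltac:(lra))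
    as [E [HE Hhalf]].
  split.
  - exists E; split; [exact HE |].
    assert (0 <= RInt (integrand M mu i mustar) 0 (mustar / 2 + 1 / 2)).
    { apply RInt_ge_0; [lra | apply ex_RInt_integrand, Hi |].
      intros; apply integrand_nonneg; auto; lra. }
    pose proof (Hhalf (mustar / 2 + 1 / 2) (Rle_refl _)); lra.
  - intros Hm3 Hmu4; exists E; split; [exact HE |].
    set (B := Rmax (mustar / 2 + 1 / 2) ((mu i + mustar) / 2 + 1 / 2)).
    pose proof (Hhalf B (Rmax_l _ _)).
    pose proof (RInt_integrand_ge_near_mid M mu i mustar Hi B Hmu ltac:(lra) (Rmax_r _ _)).
    pose proof (quantitative_constant_le M a mustar (mustar - mu i) HM ltac:(lra) Ham ltac:(nra)).
    lra.
Qed.
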